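(* Let $(\mathbf A,\exists)$ be a monadic Pavelka algebra with $\mathbf A$ semisimple, and let $\forall(x)=\neg\exists(\neg x)$. The following are equivalent: (i) the relation $R\colon\mathrm{Spec_M}\mathbf A\times\mathrm{Spec_M}\mathbf A\to[0,1]$, $R(F,F')=\bigwedge_{a\in A}(\forall(a)/F'\rightarrow a/F)$, is $\{0,1\}$-valued (i.e. $(\mathbf A,\exists)$ is induced by a boolean equivalence); (ii) $(\mathbf A,\exists)$ is a monadic Pavelka algebra in the original sense, i.e. for all $x,y\in A$ and all constants $\mathbf r$: $x\le\exists x$; $\exists(x\vee y)=\exists x\vee\exists y$; $\exists(\neg\exists x)=\neg\exists x$; $\exists(\exists x\oplus\exists y)=\exists x\oplus\exists y$; $\exists(x\oplus x)=\exists x\oplus\exists x$; $\exists(x\cdot x)=\exists x\cdot\exists x$; and $\exists\mathbf r=\mathbf r$; (iii) $\forall(x)\cdot\forall(y)\le\forall(x\cdot y)$ for all $x,y\in A$.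
   Context: An MV-algebra $(A;\oplus,\neg,0)$ carries derived operations $1=\neg0$, $x\cdot y=\neg(\neg x\oplus\neg y)$, $x\rightarrow y=\neg x\oplus y$, $x\vee y=\neg(\neg x\oplus y)\oplus y$, $x\wedge y=\neg(\neg x\vee\neg y)$, order $x\le y$ iff $\neg x\oplus y=1$. The standard MV-algebra is $[0,1]$ with $x\oplus y=\min\{x+y,1\}$, $\neg x=1-x$. A Pavelka algebra is $\mathbf A=(A;\oplus,\neg,\{\mathbf r\mid r\in[0,1]\cap\mathbb Q\})$ with $(A;\oplus,\neg,\mathbf 0)$ an MV-algebra, $\mathbf r\oplus\mathbf s=\mathbf t$ whenever $\min\{r+s,1\}=t$, $\neg\mathbf r=\mathbf s$ whenever $1-r=s$. Filters are filters of the MV-reduct; $\mathrm{Spec_M}\mathbf A$ is the set of maximal proper filters; for $F\in\mathrm{Spec_M}\mathbf A$, $\mathbf A/F$ embeds uniquely into $[0,1]$ and $x/F$ is identified with its image. Semisimple: MV-reduct is a subdirect product of simple MV-algebras. A monadic Pavelka algebra is $(\mathbf A,\exists)$ with $\exists$ a closure operator (monotone, $x\le\exists x$, $\exists\exists x=\exists x$) such that $\exists(\neg\exists(x))=\neg\exists(x)$ and $\mathbf r\cdot\exists(x)=\exists(\mathbf r\cdot x)$ for all $x$ and constants $\mathbf r$. *)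

From Stdlib Require Import Reals QArith Qcanon.

Record MVAlg := {
  mcar :> Type;
  mplus : mcar -> mcar -> mcar;
  mneg : mcar -> mcar;
  mzero : mcar;
  mplus_assoc : forall x y z, mplus x (mplus y z) = mplus (mplus x y) z;
  mplus_comm : forall x y, mplus x y = mplus y x;
  mplus_zero : forall x, mplus x mzero = x;
  mneg_neg : forall x, mneg (mneg x) = x;
  mplus_one : forall x, mplus x (mneg mzero) = mneg mzero;
  mluk : forall x y, mplus (mneg (mplus (mneg x) y)) y = mplus (mneg (mplus (mneg y) x)) x
}.

Section Derived.
Variable A : MVAlg.
Definition mone : A := mneg A (mzero A).
Definition mmul (x y : A) : A := mneg A (mplus A (mneg A x) (mneg A y)).
Definition mimp (x y : A) : A := mplus A (mneg A x) y.
Definition mjoin (x y : A) : A := mplus A (mneg A (mplus A (mneg A x) y)) y.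
Definition mmeet (x y : A) : A := mneg A (mjoin (mneg A x) (mneg A y)).
Definition mle (x y : A) : Prop := mplus A (mneg A x) y = mone.

Definition is_filter (F : A -> Prop) : Prop :=
  F mone /\ (forall x y, F x -> mle x y -> F y) /\ (forall x y, F x -> F y -> F (mmul x y)).
Definition proper_filter (F : A -> Prop) : Prop := is_filter F /\ ~ F (mzero A).
Definition maximal_filter (F : A -> Prop) : Prop :=
  proper_filter F /\
  forall G : A -> Prop, proper_filter G -> (forall x, F x -> G x) -> forall x, G x -> F x.
Definition simple_mv : Prop :=
  mzero A <> mone /\
  forall F : A -> Prop, is_filter F -> (forall x, F x -> x = mone) \/ (forall x, F x).
End Derived.

Arguments mone {A}. Arguments mmul {A}. Arguments mimp {A}. Arguments mjoin {A}.
Arguments mmeet {A}. Arguments mle {A}.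

Definition is_mv_hom (A B : MVAlg) (f : A -> B) : Prop :=
  (forall x y, f (mplus A x y) = mplus B (f x) (f y)) /\
  (forall x, f (mneg A x) = mneg B (f x)) /\
  f (mzero A) = mzero B.

Definition semisimple (A : MVAlg) : Prop :=
  exists (I : Type) (B : I -> MVAlg) (f : forall i, A -> B i),
    (forall i, simple_mv (B i)) /\
    (forall i, is_mv_hom A (B i) (f i)) /\
    (forall i, forall b : B i, exists a, f i a = b) /\
    (forall x y : A, (forall i, f i x = f i y) -> x = y).

Definition splus (x y : R) : R := Rmin (x + y) 1.
Definition sneg (x : R) : R := 1 - x.
Definition simp (x y : R) : R := splus (sneg x) y.

Definition is_std_hom (A : MVAlg) (h : A -> R) : Prop :=
  (forall x, 0 <= h x <= 1)%R /\
  (forall x y, h (mplus A x y) = splus (h x) (h y)) /\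
  (forall x, h (mneg A x) = sneg (h x)) /\
  h (mzero A) = 0%R.

(** [h] realises the unique embedding of A/F into [0,1]:
    an MV-homomorphism into [0,1] whose 1-kernel is exactly F,
    so that x/F is identified with h x. *)
Definition quot_embedding (A : MVAlg) (F : A -> Prop) (h : A -> R) : Prop :=
  is_std_hom A h /\ forall x, F x <-> h x = 1%R.

Definition unitQ (r : Qc) : Prop := Qcle (Q2Qc 0) r /\ Qcle r (Q2Qc 1).

Record Pavelka := {
  pmv :> MVAlg;
  pconst : Qc -> pmv;   (* only meaningful on rationals in [0,1] *)
  pconst_zero : pconst (Q2Qc 0) = mzero pmv;
  pconst_plus_lt : forall r s, unitQ r -> unitQ s -> Qcle (Qcplus r s) (Q2Qc 1) ->
      mplus pmv (pconst r) (pconst s) = pconst (Qcplus r s);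
  pconst_plus_ge : forall r s, unitQ r -> unitQ s -> Qcle (Q2Qc 1) (Qcplus r s) ->
      mplus pmv (pconst r) (pconst s) = pconst (Q2Qc 1);
  pconst_neg : forall r, unitQ r -> mneg pmv (pconst r) = pconst (Qcminus (Q2Qc 1) r)
}.

(** Monadic Pavelka algebra (closure-operator version) *)
Definition monadic (A : Pavelka) (E : A -> A) : Prop :=
  (forall x y, mle x y -> mle (E x) (E y)) /\
  (forall x, mle x (E x)) /\
  (forall x, E (E x) = E x) /\
  (forall x, E (mneg A (E x)) = mneg A (E x)) /\
  (forall x r, unitQ r -> mmul (pconst A r) (E x) = E (mmul (pconst A r) x)).

Definition univ (A : Pavelka) (E : A -> A) (x : A) : A := mneg A (E (mneg A x)).

Definition monadic_original (A : Pavelka) (E : A -> A) : Prop :=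
  (forall x, mle x (E x)) /\
  (forall x y, E (mjoin x y) = mjoin (E x) (E y)) /\
  (forall x, E (mneg A (E x)) = mneg A (E x)) /\
  (forall x y, E (mplus A (E x) (E y)) = mplus A (E x) (E y)) /\
  (forall x, E (mplus A x x) = mplus A (E x) (E x)) /\
  (forall x, E (mmul x x) = mmul (E x) (E x)) /\
  (forall r, unitQ r -> E (pconst A r) = pconst A r).

Definition is_inf (P : R -> Prop) (r : R) : Prop :=
  (forall t, P t -> (r <= t)%R) /\ (forall b, (forall t, P t -> (b <= t)%R) -> (b <= r)%R).

(** R(F,F') = inf_{a in A} (forall(a)/F' -> a/F) is {0,1}-valued,
    where a/F := h a, a/F' := h' a for the embeddings of A/F, A/F' into [0,1]. *)
Definition R_boolean (A : Pavelka) (E : A -> A) : Prop :=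
  forall (F F' : A -> Prop) (h h' : A -> R),
    maximal_filter A F -> maximal_filter A F' ->
    quot_embedding A F h -> quot_embedding A F' h' ->
    forall r : R,
      is_inf (fun t => exists a : A, t = simp (h' (univ A E a)) (h a)) r ->
      r = 0%R \/ r = 1%R.

(* Semisimplicity reduces every (in)equation to the real points of A, i.e. homomorphisms into
   [0,1] with maximal 1-kernel; for a maximal filter M the constants give the point
   x ↦ sup {r | r → x ∈ M}. The fixed points of ∃ are closed under ¬, ∨ and multiplication by
   constants, and both (ii) and (iii) make them closed under ⊕. Two points differing on a fixed
   element b then take the values 0 and 1 on a multiple of b, so R is {0,1}-valued.
   Conversely, if R is {0,1}-valued, a point p with R(p,q) > 0 agrees with q on fixed elements,
   and extending a suitable filter to a maximal one shows that q(∃a) is the supremum of p(a)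
   over such p; as ⊕ and ⊙ are monotone and continuous on [0,1], the identities of (ii)
   follow. Finally (ii) gives (iii) because ∃(¬x ⊕ ¬y) ≤ ∃¬x ⊕ ∃¬y. *)

From Stdlib Require Import ZArith Reals QArith Qcanon Qreals Lra Lia Classical List.
From mathcomp Require classical_sets.

Ltac case_minmax :=
  unfold Rmin, Rmax in *;
  repeat match goal with
  | |- context [Rle_dec ?x ?y] => destruct (Rle_dec x y)
  | H : context [Rle_dec ?x ?y] |- _ => destruct (Rle_dec x y)
  end.

Local Notation Q1 := (Q2Qc 1).

Definition Qc2R (q : Qc) : R := Q2R q.

Lemma Qc2R_inj r s : Qc2R r = Qc2R s -> r = s.
Proof. intro H. apply Qc_is_canon, eqR_Qeq, H. Qed.

Lemma Qc2R_Q2Qc q : Qc2R (Q2Qc q) = Q2R q.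
Proof. apply Qeq_eqR, Qred_correct. Qed.

Lemma Qc2R_plus r s : Qc2R (r + s) = (Qc2R r + Qc2R s)%R.
Proof. unfold Qcplus. rewrite Qc2R_Q2Qc. apply Q2R_plus. Qed.

Lemma Qc2R_minus r s : Qc2R (r - s) = (Qc2R r - Qc2R s)%R.
Proof.
  unfold Qcminus, Qcopp. rewrite Qc2R_plus, Qc2R_Q2Qc, Q2R_opp. reflexivity.
Qed.

Lemma Qc2R_0 : Qc2R (Q2Qc 0) = 0%R.
Proof. rewrite Qc2R_Q2Qc. unfold Q2R. simpl. lra. Qed.

Lemma Qc2R_1 : Qc2R Q1 = 1%R.
Proof. rewrite Qc2R_Q2Qc. unfold Q2R. simpl. lra. Qed.

Lemma Qc2R_compl r : Qc2R (Q1 - r) = (1 - Qc2R r)%R.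
Proof. rewrite Qc2R_minus, Qc2R_1. reflexivity. Qed.

Lemma unitQ_iff r : unitQ r <-> (0 <= Qc2R r <= 1)%R.
Proof.
  unfold unitQ, Qcle. rewrite <- Qc2R_0, <- Qc2R_1. unfold Qc2R.
  split; intros [H0 H1]; split; auto using Qle_Rle, Rle_Qle.
Qed.

Lemma unitQ_bounds r : unitQ r -> (0 <= Qc2R r <= 1)%R.
Proof. apply unitQ_iff. Qed.

Lemma unitQ_compl r : unitQ r -> unitQ (Q1 - r).
Proof.
  intro Hr. apply unitQ_bounds in Hr. apply unitQ_iff. rewrite Qc2R_compl. lra.
Qed.

Lemma ratio_unit (a b : R) : (0 <= a <= b)%R -> (0 < b)%R -> (0 <= a / b <= 1)%R.
Proof.
  intros Hab Hb. unfold Rdiv. split.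
  - apply Rmult_le_pos; [lra | left; apply Rinv_0_lt_compat, Hb].
  - apply Rmult_le_reg_r with b; [exact Hb|]. rewrite Rmult_assoc, Rinv_l; lra.
Qed.

Lemma Q_dense (a b : R) : (a < b)%R -> exists q : Q, (a < Q2R q < b)%R.
Proof.
  intro Hab.
  destruct (archimed (/ (b - a))) as [Hn _].
  set (n := up (/ (b - a))) in Hn.
  assert (Hinv : (0 < / (b - a))%R) by (apply Rinv_0_lt_compat; lra).
  assert (Hnpos : (0 < IZR n)%R) by lra.
  assert (Hgap : (1 < IZR n * (b - a))%R).
  { apply Rmult_lt_compat_r with (r := (b - a)%R) in Hn; [|lra].
    rewrite Rinv_l in Hn; lra. }
  destruct (archimed (a * IZR n)) as [K1 K2].
  exists (Qmake (up (a * IZR n)) (Z.to_pos n)).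
  unfold Q2R. simpl. rewrite Z2Pos.id by (apply lt_IZR; exact Hnpos).
  split; apply Rmult_lt_reg_r with (r := IZR n); try lra;
    rewrite Rmult_assoc, Rinv_l by lra; nra.
Qed.

Lemma Qc_dense_unit (a b : R) : (0 <= a)%R -> (a < b)%R -> (b <= 1)%R ->
  exists r : Qc, unitQ r /\ (a < Qc2R r < b)%R.
Proof.
  intros Ha Hab Hb. destruct (Q_dense a b Hab) as [q Hq].
  exists (Q2Qc q). rewrite unitQ_iff, Qc2R_Q2Qc. lra.
Qed.

Lemma is_inf_exists (S : R -> Prop) (lb t0 : R) :
  S t0 -> (forall t, S t -> (lb <= t)%R) -> exists r, is_inf S r.
Proof.
  intros H0 Hlb.
  destruct (completeness (fun u => S (- u)%R)) as [m [Hm1 Hm2]].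
  - exists (- lb)%R. intros u Hu. apply Hlb in Hu. lra.
  - exists (- t0)%R. rewrite Ropp_involutive. exact H0.
  - exists (- m)%R. split.
    + intros t Ht. enough (- t <= m)%R by lra.
      apply Hm1. rewrite Ropp_involutive. exact Ht.
    + intros b Hb. enough (m <= - b)%R by lra.
      apply Hm2. intros u Hu. apply Hb in Hu. lra.
Qed.

Lemma le_of_lipschitz_approx (g : R -> R) (k e L : R) : (0 <= k)%R ->
  (forall t u, (t <= u)%R -> (g u - g t <= k * (u - t))%R) ->
  (forall t, (t < e)%R -> (g t <= L)%R) -> (g e <= L)%R.
Proof.
  intros Hk Hg HL. apply Rnot_lt_le. intro Hlt.
  set (d := ((g e - L) / (2 * (k + 1)))%R).
  assert (Hd : (0 < d)%R) by (unfold d; apply Rdiv_lt_0_compat; lra).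
  assert (Hkd : ((k + 1) * d = (g e - L) / 2)%R) by (unfold d; field; lra).
  pose proof (Hg (e - d)%R e ltac:(lra)). pose proof (HL (e - d)%R ltac:(lra)). nra.
Qed.

Local Notation "x ⊕ y" := (mplus _ x y) (at level 50, left associativity).
Local Notation "¬ x" := (mneg _ x) (at level 35, right associativity).
Local Notation "x ⊙ y" := (mmul x y) (at level 40, left associativity).
Local Notation "x ≤ y" := (mle x y) (at level 70).

Section MVTheory.
Context {A : MVAlg}.
Local Notation "0" := (mzero A).
Local Notation "1" := (@mone A).
Implicit Types x y z u v a b c d : A.

Lemma mplusA x y z : x ⊕ (y ⊕ z) = x ⊕ y ⊕ z. Proof. apply mplus_assoc. Qed.
Lemma mplusC x y : x ⊕ y = y ⊕ x. Proof. apply mplus_comm. Qed.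
Lemma mplus0 x : x ⊕ 0 = x. Proof. apply mplus_zero. Qed.
Lemma mplus0l x : 0 ⊕ x = x. Proof. rewrite mplusC. apply mplus0. Qed.
Lemma mplus1 x : x ⊕ 1 = 1. Proof. apply mplus_one. Qed.
Lemma mplus1l x : 1 ⊕ x = 1. Proof. rewrite mplusC. apply mplus1. Qed.
Lemma mnegK x : ¬ ¬ x = x. Proof. apply mneg_neg. Qed.
Lemma mneg1 : ¬ 1 = 0. Proof. apply mnegK. Qed.

Lemma mplusNl x : ¬ x ⊕ x = 1.
Proof. pose proof (mluk A x 1) as H. rewrite !mplus1, mneg1, mplus0l in H. symmetry. exact H. Qed.

Lemma mle_refl x : x ≤ x. Proof. apply mplusNl. Qed.

Lemma mle_plusP x y : x ≤ y <-> exists z, x ⊕ z = y.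
Proof.
  split.
  - intro H. exists (¬ (¬ y ⊕ x)).
    pose proof (mluk A x y) as L. unfold mle in H. rewrite H, mneg1, mplus0l in L.
    rewrite mplusC. symmetry. exact L.
  - intros [z <-]. unfold mle. rewrite mplusA, mplusNl, mplus1l. reflexivity.
Qed.

Lemma mle_trans x y z : x ≤ y -> y ≤ z -> x ≤ z.
Proof. rewrite !mle_plusP. intros [a <-] [b <-]. exists (a ⊕ b). apply mplusA. Qed.

Lemma mplus_mono x y u v : x ≤ y -> u ≤ v -> x ⊕ u ≤ y ⊕ v.
Proof.
  rewrite !mle_plusP. intros [a <-] [b <-]. exists (a ⊕ b).
  rewrite <- !mplusA. f_equal. rewrite !mplusA. f_equal. apply mplusC.
Qed.

Lemma mneg_mono x y : x ≤ y -> ¬ y ≤ ¬ x.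
Proof. unfold mle. rewrite mnegK, mplusC. auto. Qed.

Lemma mneg_le x y : ¬ y ≤ ¬ x <-> x ≤ y.
Proof. split; [intro H; rewrite <- (mnegK x), <- (mnegK y)|]; apply mneg_mono; auto. Qed.

Lemma mle0x x : 0 ≤ x. Proof. unfold mle. apply mplus1l. Qed.
Lemma mlex1 x : x ≤ 1. Proof. unfold mle. apply mplus1. Qed.
Lemma mplus_ubl x y : x ≤ x ⊕ y. Proof. apply mle_plusP. eauto. Qed.
Lemma mplus_ubr x y : y ≤ x ⊕ y. Proof. rewrite mplusC. apply mplus_ubl. Qed.

Lemma mjoinC x y : mjoin x y = mjoin y x. Proof. apply mluk. Qed.

Lemma mjoin_idr x y : x ≤ y -> mjoin x y = y.
Proof. unfold mle, mjoin. intro H. rewrite H, mneg1, mplus0l. reflexivity. Qed.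

Lemma mle_antisym x y : x ≤ y -> y ≤ x -> x = y.
Proof.
  intros Hxy Hyx. rewrite <- (mjoin_idr _ _ Hxy), mjoinC. symmetry. apply mjoin_idr, Hyx.
Qed.

Lemma mle1_eq x : 1 ≤ x -> x = 1. Proof. intro H. apply mle_antisym; auto using mlex1. Qed.
Lemma mle0_eq x : x ≤ 0 -> x = 0. Proof. intro H. apply mle_antisym; auto using mle0x. Qed.

Lemma mmulC x y : x ⊙ y = y ⊙ x. Proof. unfold mmul. rewrite mplusC. reflexivity. Qed.
Lemma mmulA x y z : x ⊙ (y ⊙ z) = x ⊙ y ⊙ z.
Proof. unfold mmul. rewrite !mnegK, mplusA. reflexivity. Qed.
Lemma mmul1 x : x ⊙ 1 = x. Proof. unfold mmul. rewrite mneg1, mplus0, mnegK. reflexivity. Qed.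
Lemma mmul1l x : 1 ⊙ x = x. Proof. rewrite mmulC. apply mmul1. Qed.
Lemma mmulN x : x ⊙ ¬ x = 0. Proof. unfold mmul. rewrite mnegK, mplusNl. apply mneg1. Qed.
Lemma mneg_plus x y : ¬ (x ⊕ y) = ¬ x ⊙ ¬ y. Proof. unfold mmul. rewrite !mnegK. reflexivity. Qed.
Lemma mneg_mul x y : ¬ (x ⊙ y) = ¬ x ⊕ ¬ y. Proof. apply mnegK. Qed.

Lemma mmul_mono x y u v : x ≤ y -> u ≤ v -> x ⊙ u ≤ y ⊙ v.
Proof. intros H1 H2. apply mneg_mono, mplus_mono; apply mneg_mono; auto. Qed.

Lemma mle_residual x y z : x ⊙ y ≤ z <-> x ≤ ¬ y ⊕ z.
Proof. unfold mle. rewrite mneg_mul, mplusA. tauto. Qed.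

Lemma mmul_lbl x y : x ⊙ y ≤ x.
Proof. apply mle_residual. rewrite mplusC. apply mplus_ubl. Qed.
Lemma mmul_lbr x y : x ⊙ y ≤ y. Proof. rewrite mmulC. apply mmul_lbl. Qed.

Lemma mjoinE x y : mjoin x y = x ⊙ ¬ y ⊕ y. Proof. unfold mjoin, mmul. rewrite mnegK. reflexivity. Qed.
Lemma mjoin_ubr x y : y ≤ mjoin x y. Proof. apply mplus_ubr. Qed.
Lemma mjoin_ubl x y : x ≤ mjoin x y. Proof. rewrite mjoinC. apply mjoin_ubr. Qed.

Lemma mjoin_lub x y z : x ≤ z -> y ≤ z -> mjoin x y ≤ z.
Proof.
  intros Hx Hy. rewrite (mjoinE x).
  assert (Hz : z = z ⊙ ¬ y ⊕ y) by (rewrite <- mjoinE, mjoinC; symmetry; apply mjoin_idr, Hy).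
  rewrite Hz. apply mplus_mono, mle_refl. apply mmul_mono; auto using mle_refl.
Qed.

Lemma mjoin_mono x y u v : x ≤ y -> u ≤ v -> mjoin x u ≤ mjoin y v.
Proof. intros. apply mjoin_lub; eapply mle_trans; eauto using mjoin_ubl, mjoin_ubr. Qed.

Lemma mjoin_le_plus x y : mjoin x y ≤ x ⊕ y.
Proof. apply mjoin_lub. apply mplus_ubl. apply mplus_ubr. Qed.

Lemma mmeet_lbl x y : mmeet x y ≤ x.
Proof. unfold mmeet. rewrite <- mneg_le, !mnegK. apply mjoin_ubl. Qed.
Lemma mmeet_lbr x y : mmeet x y ≤ y.
Proof. unfold mmeet. rewrite <- mneg_le, !mnegK. apply mjoin_ubr. Qed.
Lemma mmeet_glb x y z : z ≤ x -> z ≤ y -> z ≤ mmeet x y.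
Proof. intros. unfold mmeet. rewrite <- mneg_le, mnegK. apply mjoin_lub; apply mneg_mono; auto. Qed.

Lemma mmeetC x y : mmeet x y = mmeet y x. Proof. unfold mmeet. rewrite mjoinC. reflexivity. Qed.
Lemma mmeetE x y : mmeet x y = x ⊙ (¬ x ⊕ y).
Proof. unfold mmeet. rewrite mjoinC. unfold mjoin, mmul. rewrite !mnegK, (mplusC y). f_equal. apply mplusC. Qed.
Lemma mmeet_idl x y : x ≤ y -> mmeet x y = x.
Proof. intro H. apply mle_antisym. apply mmeet_lbl. apply mmeet_glb; auto using mle_refl. Qed.

Lemma mmul_mjoin x y z : x ⊙ mjoin y z ≤ mjoin (x ⊙ y) (x ⊙ z).
Proof.
  rewrite mmulC. apply mle_residual.
  apply mjoin_lub; apply mle_residual; rewrite mmulC; [apply mjoin_ubl | apply mjoin_ubr].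
Qed.

Lemma mmul_mimp x y : x ⊙ mimp x y ≤ y.
Proof. unfold mimp. rewrite <- mmeetE. apply mmeet_lbr. Qed.

Lemma mimp_trans x y z : mimp x y ⊙ mimp y z ≤ mimp x z.
Proof.
  unfold mimp at 3. apply (proj1 (mle_residual _ x _)).
  rewrite <- mmulA, (mmulC (mimp y z) x), mmulA, (mmulC (mimp x y) x).
  apply mle_trans with (y ⊙ mimp y z); [apply mmul_mono, mle_refl|]; apply mmul_mimp.
Qed.

Lemma mimp_plus a b c d : mimp a b ⊙ mimp c d ≤ mimp (a ⊕ c) (b ⊕ d).
Proof.
  assert (Hstep : forall x y z, mimp x y ⊙ (x ⊕ z) ≤ y ⊕ z).
  { intros x y z. apply mle_residual. unfold mimp.
    rewrite mneg_plus, (mplusC y z), mplusA, <- mjoinE.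
    apply mplus_mono; [apply mjoin_ubl | apply mle_refl]. }
  unfold mimp at 3. apply (proj1 (mle_residual _ (a ⊕ c) _)).
  rewrite <- mmulA, (mmulC (mimp c d)), mmulA.
  apply mle_trans with (mimp c d ⊙ (c ⊕ b)).
  - rewrite (mmulC (mimp c d)), (mplusC c). apply mmul_mono; auto using mle_refl.
  - rewrite (mplusC b). apply Hstep.
Qed.

Lemma mmeet_diff0 x y : mmeet (x ⊙ ¬ y) (y ⊙ ¬ x) = 0.
Proof.
  set (m := mmeet x y). set (w := mmeet (x ⊙ ¬ y) (y ⊙ ¬ x)).
  assert (Hsplit : forall u v, mmeet u v ⊕ u ⊙ ¬ v = u).
  { intros u v. assert (Ed : u ⊙ ¬ v = ¬ (¬ u ⊕ v)) by (rewrite mneg_plus, mnegK; reflexivity).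
    rewrite mmeetE, Ed, <- (mnegK (¬ u ⊕ v)) at 1. rewrite <- mjoinE, mjoinC.
    apply mjoin_idr. rewrite <- Ed. apply mmul_lbl. }
  assert (Hmw : m ⊕ w ≤ m).
  { apply mmeet_glb.
    - rewrite <- (Hsplit x y) at 1. apply mplus_mono; [apply mle_refl | apply mmeet_lbl].
    - rewrite <- (Hsplit y x) at 1. unfold m. rewrite mmeetC.
      apply mplus_mono; [apply mle_refl | apply mmeet_lbr]. }
  assert (Hwm : w ≤ ¬ m).
  { unfold m, mmeet. rewrite mnegK. apply mle_trans with (x ⊙ ¬ y).
    apply mmeet_lbl. apply mle_trans with (¬ y). apply mmul_lbr. apply mjoin_ubr. }
  apply mle0_eq. rewrite <- (mmeet_idl _ _ Hwm), mmeetC, mmeetE, mnegK.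
  rewrite <- (mmulN m), (mmulC m). apply mmul_mono; auto using mle_refl.
Qed.

Lemma prelinearity x y : mjoin (mimp x y) (mimp y x) = 1.
Proof.
  assert (E : mmeet (x ⊙ ¬ y) (y ⊙ ¬ x) = ¬ mjoin (mimp x y) (mimp y x)).
  { unfold mmeet, mimp, mmul. rewrite !mnegK. reflexivity. }
  rewrite <- (mnegK (mjoin _ _)), <- E, mmeet_diff0. reflexivity.
Qed.

Fixpoint mpow x (n : nat) : A := match n with O => 1 | S k => x ⊙ mpow x k end.

Lemma mpow_add x n k : mpow x (n + k) = mpow x n ⊙ mpow x k.
Proof. induction n as [|n IH]; simpl. rewrite mmul1l; auto. rewrite IH, mmulA. auto. Qed.

Lemma mjoin_mpow_eq1 a b n : mjoin a b = 1 -> mjoin (mpow a n) b = 1.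
Proof.
  intro H. induction n as [|n IH]; simpl; apply mle1_eq.
  - apply mjoin_ubl.
  - rewrite <- H. apply mjoin_lub; [|apply mjoin_ubr].
    rewrite <- (mmul1 a) at 1. rewrite <- IH.
    eapply mle_trans. apply mmul_mjoin. apply mjoin_mono. apply mle_refl. apply mmul_lbr.
Qed.

Fixpoint mmuln x (n : nat) : A := match n with O => 0 | S k => x ⊕ mmuln x k end.

Fixpoint mprod (l : list A) : A := match l with nil => 1 | x :: l => x ⊙ mprod l end.

Lemma mprod_app l1 l2 : mprod (l1 ++ l2) = mprod l1 ⊙ mprod l2.
Proof. induction l1 as [|x l IH]; simpl. rewrite mmul1l; auto. rewrite IH, mmulA. auto. Qed.

End MVTheory.


Section Filters.
Context {A : MVAlg}.
Local Notation "0" := (mzero A).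
Local Notation "1" := (@mone A).
Implicit Types x y z a b : A.
Implicit Types F M G : A -> Prop.

Lemma filter_up F x y : is_filter A F -> F x -> x ≤ y -> F y.
Proof. intros [_ [H _]]. eauto. Qed.
Lemma filter_mul F x y : is_filter A F -> F x -> F y -> F (x ⊙ y).
Proof. intros [_ [_ H]]. eauto. Qed.
Lemma filter_one F : is_filter A F -> F 1.
Proof. intros [H _]. exact H. Qed.

Lemma filter_mimp_trans F x y z : is_filter A F -> F (mimp x y) -> F (mimp y z) -> F (mimp x z).
Proof.
  intros HF H1 H2. apply filter_up with (mimp x y ⊙ mimp y z); auto.
  apply filter_mul; auto. apply mimp_trans.
Qed.

Definition gen_filter (S : A -> Prop) x := exists l, Forall S l /\ mprod l ≤ x.

Lemma gen_filter_is_filter S : is_filter A (gen_filter S).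
Proof.
  split; [|split].
  - exists nil. split; auto. apply mle_refl.
  - intros x y [l [Hl Hle]] Hxy. exists l. split; auto. eapply mle_trans; eauto.
  - intros x y [l [Hl Hle]] [l' [Hl' Hle']]. exists (l ++ l').
    split. apply Forall_app; auto. rewrite mprod_app. apply mmul_mono; auto.
Qed.

Lemma gen_filter_incl S x : S x -> gen_filter S x.
Proof. intro Hx. exists (x :: nil). split; auto. simpl. rewrite mmul1. apply mle_refl. Qed.

Lemma maximal_is_filter M : maximal_filter A M -> is_filter A M.
Proof. intros [[H _] _]. exact H. Qed.
Lemma maximal_not0 M : maximal_filter A M -> ~ M 0.
Proof. intros [[_ H] _]. exact H. Qed.

Lemma maximal_filter_ext M M' : (forall x, M x <-> M' x) ->
  maximal_filter A M -> maximal_filter A M'.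
Proof.
  intros E [[[H1 [H2 H3]] H0] Hmax]. split; [split; [split; [|split]|]|].
  - apply E; auto.
  - intros x y Hx Hxy. apply E. apply E in Hx. eauto.
  - intros x y Hx Hy. apply E. apply E in Hx. apply E in Hy. eauto.
  - rewrite <- E. exact H0.
  - intros G HG HMG x Gx. apply E, (Hmax G HG); auto. intros z Mz. apply HMG, E, Mz.
Qed.

Lemma maximal_mneg_mpow M z : maximal_filter A M -> ~ M z -> exists n, M (¬ mpow z n).
Proof.
  intros HM Hz. pose proof (maximal_is_filter M HM) as HF.
  set (G := fun x => exists m n, M m /\ m ⊙ mpow z n ≤ x).
  assert (HG : is_filter A G).
  { split; [|split].
    - exists 1, O. split. apply filter_one; auto. simpl. rewrite mmul1. apply mle_refl.
    - intros x y [m [n [Hm Hle]]] Hxy. exists m, n. split; auto. eapply mle_trans; eauto.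
    - intros x y [m [n [Hm H1]]] [m' [n' [Hm' H2]]]. exists (m ⊙ m'), (n + n')%nat.
      split. apply filter_mul; auto. rewrite mpow_add.
      eapply mle_trans; [|apply mmul_mono; [exact H1|exact H2]].
      rewrite <- !mmulA, (mmulA m' (mpow z n)), (mmulC m' (mpow z n)), <- (mmulA (mpow z n)).
      apply mle_refl. }
  destruct (classic (G 0)) as [[m [n [Hm Hle]]]|HG0].
  - exists n. eapply filter_up; eauto. rewrite <- (mplus0 (¬ mpow z n)). apply mle_residual, Hle.
  - exfalso. apply Hz. destruct HM as [_ Hmax]. apply (Hmax G). split; auto.
    + intros x Hx. exists x, O. split; auto. simpl. rewrite mmul1. apply mle_refl.
    + exists 1, 1%nat. split. apply filter_one; auto. simpl. rewrite mmul1, mmul1l. apply mle_refl.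
Qed.

(* Prelinearity makes every maximal filter prime. *)
Lemma maximal_mimp_total M x y : maximal_filter A M -> M (mimp x y) \/ M (mimp y x).
Proof.
  intro HM. pose proof (maximal_is_filter M HM) as HF.
  apply NNPP. intros Hno. apply not_or_and in Hno as [H1 H2].
  destruct (maximal_mneg_mpow M _ HM H1) as [n Hn].
  destruct (maximal_mneg_mpow M _ HM H2) as [k Hk].
  apply (maximal_not0 M HM).
  assert (E : ¬ mpow (mimp x y) n ⊙ ¬ mpow (mimp y x) k = 0).
  { rewrite <- mneg_plus, <- mneg1. f_equal. apply mle1_eq.
    eapply mle_trans; [|apply mjoin_le_plus].
    pose proof (mjoin_mpow_eq1 _ _ n (prelinearity x y)) as J. rewrite mjoinC in J.
    rewrite mjoinC, (mjoin_mpow_eq1 _ _ k J). apply mle_refl. }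
  rewrite <- E. apply filter_mul; auto.
Qed.

Lemma proper_filter_extend G : proper_filter A G ->
  exists M, maximal_filter A M /\ (forall x, G x -> M x).
Proof.
  intros [HG HG0].
  (* Zorn is applied to proper filters above G together with the empty set, so that the union
     of the empty chain is admissible. *)
  set (P := fun X : A -> Prop => (forall x, ~ X x) \/ (proper_filter A X /\ forall x, G x -> X x)).
  destruct (@classical_sets.Zorn_bigcup A P) as [M [PM Mmax]].
  - intros C CP Ctot.
    destruct (classic (exists X, C X /\ exists x, X x)) as [[X0 [CX0 [x0 Hx0]]]|Hno].
    + right.
      assert (Fil : forall X, C X -> forall x, X x -> proper_filter A X /\ forall x, G x -> X x).
      { intros X CX x Xx. destruct (CP X CX) as [H|H]; auto. exfalso; eapply H; eauto. }
      destruct (Fil X0 CX0 x0 Hx0) as [[HX0 _] GX0].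
      split; [split; [split; [|split]|]|].
      * exists X0; auto. apply filter_one, HX0.
      * intros x y [X CX Xx] Hxy. exists X; auto. eapply filter_up; eauto. apply (Fil X CX x Xx).
      * intros x y [X CX Xx] [Y CY Yy]. destruct (Ctot X Y CX CY) as [S|S].
        -- exists Y; auto. apply filter_mul; auto. apply (Fil Y CY y Yy).
        -- exists X; auto. apply filter_mul; auto. apply (Fil X CX x Xx).
      * intros [X CX X0']. apply (Fil X CX _ X0'), X0'.
      * intros x Gx. exists X0; auto.
    + left. intros x [X CX Xx]. apply Hno. exists X. eauto.
  - destruct PM as [H0|[PM GM]].
    + exfalso. apply (Mmax G).
      * split. intros x Mx. exfalso; eapply H0; eauto.
        intro S. apply (H0 1), S, filter_one, HG.
      * right. split; [split|]; auto.
    + exists M. split; auto. split; auto.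
      intros H PH MH x Hx. apply NNPP. intro Mx. apply (Mmax H).
      * split. exact MH. intro S. apply Mx, S, Hx.
      * right. split; auto.
Qed.

End Filters.

Section MVHom.
Context {A B : MVAlg} (f : A -> B) (Hf : is_mv_hom A B f).

Lemma hom_plus x y : f (x ⊕ y) = f x ⊕ f y. Proof. apply Hf. Qed.
Lemma hom_neg x : f (¬ x) = ¬ f x. Proof. apply Hf. Qed.
Lemma hom_one : f mone = mone. Proof. unfold mone. rewrite hom_neg. f_equal. apply Hf. Qed.
Lemma hom_mul x y : f (x ⊙ y) = f x ⊙ f y.
Proof. unfold mmul. rewrite hom_neg, hom_plus, !hom_neg. reflexivity. Qed.
Lemma hom_join x y : f (mjoin x y) = mjoin (f x) (f y).
Proof. unfold mjoin. rewrite hom_plus, hom_neg, hom_plus, hom_neg. reflexivity. Qed.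
Lemma hom_le x y : x ≤ y -> f x ≤ f y.
Proof. unfold mle. intro H. rewrite <- hom_neg, <- hom_plus, H. apply hom_one. Qed.

Lemma hom_kernel_maximal : (forall b, exists a, f a = b) -> simple_mv B ->
  maximal_filter A (fun a => f a = mone).
Proof.
  intros Hsurj [Hnt Hsimp].
  assert (HK : is_filter A (fun a => f a = mone)).
  { split; [|split].
    - apply hom_one.
    - intros x y Hx Hxy. apply mle1_eq. rewrite <- Hx. apply hom_le, Hxy.
    - intros x y Hx Hy. rewrite hom_mul, Hx, Hy. apply mmul1. }
  split. split; auto. destruct Hf as [_ [_ ->]]. exact Hnt.
  intros G [HG HG0] HKG x Gx.
  set (IG := fun b => exists g, G g /\ f g = b).
  assert (HIG : is_filter B IG).
  { split; [|split].
    - exists mone. split. apply filter_one; auto. apply hom_one.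
    - intros b b' [g [Gg <-]] Hle. destruct (Hsurj b') as [a <-]. exists (mjoin g a). split.
      + apply filter_up with g; auto. apply mjoin_ubl.
      + rewrite hom_join. apply mjoin_idr, Hle.
    - intros b b' [g [Gg <-]] [g' [Gg' <-]]. exists (g ⊙ g'). split.
      apply filter_mul; auto. apply hom_mul. }
  destruct (Hsimp IG HIG) as [H1|H2].
  - apply H1. exists x. auto.
  - exfalso. destruct (H2 (mzero B)) as [g [Gg Hg]]. apply HG0.
    rewrite <- (mmulN g). apply filter_mul; auto. apply HKG. rewrite hom_neg, Hg. reflexivity.
Qed.

End MVHom.

Record std_hom (A : MVAlg) := StdHom { std_fun :> A -> R; std_homP : is_std_hom A std_fun }.

Definition max_kernel {A : MVAlg} (h : std_hom A) : Prop := maximal_filter A (fun z => h z = 1%R).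

Section StdHom.
Context {A : MVAlg} (h : std_hom A).
Implicit Types x y : A.

Lemma std_range x : (0 <= h x <= 1)%R. Proof. apply (std_homP _ h). Qed.
Lemma std_plus x y : h (x ⊕ y) = Rmin (h x + h y) 1. Proof. apply (std_homP _ h). Qed.
Lemma std_neg x : h (¬ x) = (1 - h x)%R. Proof. apply (std_homP _ h). Qed.
Lemma std_zero : h (mzero A) = 0%R. Proof. apply (std_homP _ h). Qed.
Lemma std_one : h mone = 1%R. Proof. unfold mone. rewrite std_neg, std_zero. lra. Qed.

Lemma std_mul x y : h (x ⊙ y) = Rmax 0 (h x + h y - 1).
Proof.
  unfold mmul. rewrite std_neg, std_plus, !std_neg.
  pose proof (std_range x). pose proof (std_range y). case_minmax; lra.
Qed.

Lemma std_imp x y : h (mimp x y) = Rmin (1 - h x + h y) 1.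
Proof. unfold mimp. rewrite std_plus, std_neg. reflexivity. Qed.

Lemma std_join x y : h (mjoin x y) = Rmax (h x) (h y).
Proof.
  unfold mjoin. rewrite std_plus, std_neg, std_plus, std_neg.
  pose proof (std_range x). pose proof (std_range y). case_minmax; lra.
Qed.

Lemma std_le x y : x ≤ y -> (h x <= h y)%R.
Proof.
  unfold mle. intro H. pose proof (f_equal h H) as E. rewrite std_plus, std_neg, std_one in E.
  pose proof (std_range x). pose proof (std_range y). case_minmax; lra.
Qed.

Lemma std_muln x n : h (mmuln x n) = Rmin (INR n * h x) 1.
Proof.
  pose proof (std_range x). induction n as [|n IH]; cbn [mmuln].
  - rewrite std_zero. simpl. case_minmax; lra.
  - rewrite std_plus, IH, S_INR. pose proof (pos_INR n). case_minmax; nra.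
Qed.

End StdHom.

Section Constants.
Context {A : Pavelka}.
Local Notation "0" := (mzero A).
Local Notation "1" := (@mone A).
Local Notation c := (pconst A).
Implicit Types r s t : Qc.

Lemma pconst_negE r s : unitQ r -> Qc2R s = (1 - Qc2R r)%R -> ¬ c r = c s.
Proof. intros Hr Hs. rewrite pconst_neg by exact Hr. f_equal. apply Qc2R_inj. rewrite Qc2R_compl. lra. Qed.

Lemma pconst1 : c Q1 = 1.
Proof.
  unfold mone. rewrite <- pconst_zero. symmetry. apply pconst_negE.
  - apply unitQ_iff. rewrite Qc2R_0. lra.
  - rewrite Qc2R_0, Qc2R_1. lra.
Qed.

Lemma pconst_plus r s t : unitQ r -> unitQ s ->
  Qc2R t = (Qc2R r + Qc2R s)%R -> (Qc2R t <= 1)%R -> c r ⊕ c s = c t.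
Proof.
  intros Hr Hs Ht H1. rewrite pconst_plus_lt by (auto; apply Rle_Qle; fold (Qc2R (r + s));
    rewrite Qc2R_plus; fold (Qc2R Q1); rewrite Qc2R_1; lra).
  f_equal. apply Qc2R_inj. rewrite Qc2R_plus. lra.
Qed.

Lemma pconst_plus_sat r s : unitQ r -> unitQ s -> (1 <= Qc2R r + Qc2R s)%R -> c r ⊕ c s = 1.
Proof.
  intros Hr Hs H. rewrite <- pconst1. apply pconst_plus_ge; auto. apply Rle_Qle.
  fold (Qc2R (r + s)). fold (Qc2R Q1). rewrite Qc2R_plus, Qc2R_1. exact H.
Qed.

Lemma pconst_mul r s t : unitQ r -> unitQ s ->
  Qc2R t = (Qc2R r + Qc2R s - 1)%R -> (1 <= Qc2R r + Qc2R s)%R -> c r ⊙ c s = c t.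
Proof.
  intros Hr Hs Ht H. pose proof (unitQ_bounds _ Hr). pose proof (unitQ_bounds _ Hs).
  unfold mmul. rewrite !pconst_neg by auto.
  rewrite (pconst_plus _ _ (Q1 - t)); auto using unitQ_compl; rewrite ?Qc2R_compl; try lra.
  apply pconst_negE. apply unitQ_iff. rewrite Qc2R_compl. lra. rewrite Qc2R_compl. lra.
Qed.

Lemma pconst_mul0 r s : unitQ r -> unitQ s -> (Qc2R r + Qc2R s <= 1)%R -> c r ⊙ c s = 0.
Proof.
  intros Hr Hs H. pose proof (unitQ_bounds _ Hr). pose proof (unitQ_bounds _ Hs).
  unfold mmul. rewrite !pconst_neg, pconst_plus_sat by (auto using unitQ_compl;
    rewrite !Qc2R_compl; lra). apply mnegK.
Qed.

(* Squaring a constant [u < 1] in the MV-sense ([2u - 1]) eventually reaches [0]. *)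
Lemma maximal_pconst_lt1 (M : A -> Prop) u : maximal_filter A M -> unitQ u ->
  (Qc2R u < 1)%R -> ~ M (c u).
Proof.
  intros HM Hu Hlt. pose proof (maximal_is_filter M HM) as HF.
  assert (K : forall (k : nat) v, unitQ v -> (1 <= INR (S k) * (1 - Qc2R v))%R -> ~ M (c v)).
  { induction k as [|k IH]; intros v Hv Hk HMv; pose proof (unitQ_bounds _ Hv);
      apply (maximal_not0 M HM).
    - simpl in Hk. replace v with (Q2Qc 0) in HMv by (apply Qc2R_inj; rewrite Qc2R_0; lra).
      rewrite <- pconst_zero. exact HMv.
    - destruct (Rle_dec (Qc2R v + Qc2R v) 1) as [Hle|Hgt].
      + rewrite <- (pconst_mul0 v v); auto. apply filter_mul; auto.
      + exfalso. set (v' := (v + v - Q1)%Qc).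
        assert (Hv' : Qc2R v' = (Qc2R v + Qc2R v - 1)%R)
          by (unfold v'; rewrite Qc2R_minus, Qc2R_plus, Qc2R_1; lra).
        apply (IH v').
        * apply unitQ_iff. lra.
        * rewrite Hv'. rewrite !S_INR in Hk. rewrite S_INR. pose proof (pos_INR k). nra.
        * rewrite <- (pconst_mul v v); auto; [|lra]. apply filter_mul; auto. }
  destruct (INR_unbounded (/ (1 - Qc2R u))) as [n Hn].
  apply (K n u Hu). rewrite S_INR.
  apply Rmult_gt_compat_r with (r := (1 - Qc2R u)%R) in Hn; [|lra].
  rewrite Rinv_l in Hn; lra.
Qed.

Lemma maximal_mimp_pconst (M : A -> Prop) r s : maximal_filter A M -> unitQ r -> unitQ s ->
  M (mimp (c r) (c s)) -> (Qc2R r <= Qc2R s)%R.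
Proof.
  intros HM Hr Hs H. pose proof (unitQ_bounds _ Hr). pose proof (unitQ_bounds _ Hs).
  apply Rnot_lt_le. intro Hgt.
  set (t := (Q1 - r + s)%Qc).
  assert (Ht : Qc2R t = (1 - Qc2R r + Qc2R s)%R) by (unfold t; rewrite Qc2R_plus, Qc2R_compl; lra).
  apply (maximal_pconst_lt1 M t HM); [apply unitQ_iff; lra | lra |].
  unfold mimp in H. rewrite pconst_neg, (pconst_plus _ _ t) in H; auto using unitQ_compl;
    rewrite ?Qc2R_compl; lra.
Qed.

End Constants.

Section Holder.
Context {A : Pavelka} (M : A -> Prop) (HM : maximal_filter A M).
Local Notation c := (pconst A).
Implicit Types x y : A.
Implicit Types r s : Qc.

Let HF : is_filter A M := maximal_is_filter M HM.

Lemma filter_mimp_pconst0 x : M (mimp (c (Q2Qc 0)) x).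
Proof. unfold mimp. rewrite pconst_zero. fold (@mone A). rewrite mplus1l. apply filter_one, HF. Qed.

Definition lower_consts x (t : R) := exists r, unitQ r /\ t = Qc2R r /\ M (mimp (c r) x).

Lemma lower_consts_bound x : bound (lower_consts x).
Proof. exists 1%R. intros t [r [Hr [-> _]]]. apply unitQ_bounds, Hr. Qed.

Lemma lower_consts0 x : lower_consts x 0%R.
Proof.
  exists (Q2Qc 0). split; [apply unitQ_iff; rewrite Qc2R_0; lra|].
  split. rewrite Qc2R_0. reflexivity. apply filter_mimp_pconst0.
Qed.

(* The value of [x] in [A/M ⊆ [0,1]]: the supremum of the constants [r] with [r → x ∈ M]. *)
Definition holder x : R :=
  proj1_sig (completeness (lower_consts x) (lower_consts_bound x) (ex_intro _ 0%R (lower_consts0 x))).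

Lemma holder_lub x : is_lub (lower_consts x) (holder x).
Proof. unfold holder. destruct completeness as [m Hm]. exact Hm. Qed.

Lemma holder_ge x r : unitQ r -> M (mimp (c r) x) -> (Qc2R r <= holder x)%R.
Proof. intros Hr H. apply (proj1 (holder_lub x)). exists r. auto. Qed.

Lemma holder_le x r : unitQ r -> M (mimp x (c r)) -> (holder x <= Qc2R r)%R.
Proof.
  intros Hr H. apply (proj2 (holder_lub x)). intros t [r' [Hr' [-> H']]].
  apply (maximal_mimp_pconst M r' r HM); auto. eapply filter_mimp_trans; eauto.
Qed.

Lemma holder_range x : (0 <= holder x <= 1)%R.
Proof.
  split. apply (proj1 (holder_lub x)), lower_consts0.
  apply (proj2 (holder_lub x)). intros t [r [Hr [-> _]]]. apply unitQ_bounds, Hr.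
Qed.

Lemma mimp_pconst_of_lt x r : unitQ r -> (Qc2R r < holder x)%R -> M (mimp (c r) x).
Proof.
  intros Hr H. destruct (maximal_mimp_total M (c r) x HM) as [|H2]; auto.
  apply holder_le in H2; auto. lra.
Qed.

Lemma mimp_pconst_of_gt x r : unitQ r -> (holder x < Qc2R r)%R -> M (mimp x (c r)).
Proof.
  intros Hr H. destruct (maximal_mimp_total M x (c r) HM) as [|H2]; auto.
  apply holder_ge in H2; auto. lra.
Qed.

Lemma holder_neg x : holder (¬ x) = (1 - holder x)%R.
Proof.
  pose proof (holder_range x) as Rx. pose proof (holder_range (¬ x)) as Rnx.
  apply Rle_antisym; apply Rnot_lt_le; intro Hlt.
  - destruct (Qc_dense_unit (1 - holder x) (holder (¬ x))) as [r [Hr Hr2]]; try lra.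
    pose proof (mimp_pconst_of_lt _ _ Hr (proj2 Hr2)) as H.
    unfold mimp in H. rewrite pconst_neg, mplusC in H by exact Hr.
    apply holder_le in H; [|apply unitQ_compl, Hr]. rewrite Qc2R_compl in H. lra.
  - destruct (Qc_dense_unit (holder (¬ x)) (1 - holder x)) as [r [Hr Hr2]]; try lra.
    pose proof (mimp_pconst_of_gt _ _ Hr (proj1 Hr2)) as H.
    unfold mimp in H. rewrite mnegK, <- (mnegK (c r)), pconst_neg, mplusC in H by exact Hr.
    apply holder_ge in H; [|apply unitQ_compl, Hr]. rewrite Qc2R_compl in H. lra.
Qed.

Lemma holder_approx_above x d : (0 < d)%R -> (holder x + d <= 1)%R ->
  exists r, unitQ r /\ (holder x < Qc2R r < holder x + d)%R /\ M (mimp x (c r)).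
Proof.
  intros Hd H1. pose proof (holder_range x).
  destruct (Qc_dense_unit (holder x) (holder x + d)) as [r [Hr Hr2]]; try lra.
  exists r. split; auto. split; auto. apply mimp_pconst_of_gt; auto. lra.
Qed.

Lemma holder_approx_below x d : (0 < d)%R ->
  exists r, unitQ r /\ (holder x - d < Qc2R r <= holder x)%R /\ M (mimp (c r) x).
Proof.
  intro Hd. pose proof (holder_range x).
  destruct (Rle_lt_dec (holder x) 0) as [H0|Hpos].
  - exists (Q2Qc 0). rewrite Qc2R_0.
    split; [apply unitQ_iff; rewrite Qc2R_0; lra|]. split; [lra|]. apply filter_mimp_pconst0.
  - destruct (Qc_dense_unit (Rmax 0 (holder x - d)) (holder x)) as [r [Hr Hr2]];
      [apply Rmax_l | apply Rmax_lub_lt; lra | lra |].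
    pose proof (Rmax_r 0 (holder x - d)).
    exists r. split; auto. split; [lra|]. apply mimp_pconst_of_lt; auto. lra.
Qed.

Lemma holder_plus_le x y : (holder (x ⊕ y) <= Rmin (holder x + holder y) 1)%R.
Proof.
  pose proof (holder_range x). pose proof (holder_range y). pose proof (holder_range (x ⊕ y)).
  apply Rmin_glb; [|lra]. apply Rnot_lt_le. intro Hlt.
  set (d := ((holder (x ⊕ y) - (holder x + holder y)) / 4)%R).
  destruct (holder_approx_above x d) as [r [Hr [Hr1 Hr2]]]; try (unfold d; lra).
  destruct (holder_approx_above y d) as [s [Hs [Hs1 Hs2]]]; try (unfold d; lra).
  assert (Hrs : unitQ (r + s)) by (apply unitQ_iff; rewrite Qc2R_plus; unfold d in *; lra).
  assert (Hle : M (mimp (x ⊕ y) (c (r + s)))).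
  { assert (Hsum : c r ⊕ c s = c (r + s))
      by (apply pconst_plus; auto; rewrite Qc2R_plus; [reflexivity | unfold d in *; lra]).
    rewrite <- Hsum. apply filter_up with (mimp x (c r) ⊙ mimp y (c s)); auto.
    apply filter_mul; auto. apply mimp_plus. }
  apply holder_le in Hle; auto. rewrite Qc2R_plus in Hle. unfold d in *. lra.
Qed.

Lemma holder_plus_ge x y : (Rmin (holder x + holder y) 1 <= holder (x ⊕ y))%R.
Proof.
  pose proof (Rmin_l (holder x + holder y) 1). pose proof (Rmin_r (holder x + holder y) 1).
  apply Rnot_lt_le. intro Hlt.
  set (d := ((Rmin (holder x + holder y) 1 - holder (x ⊕ y)) / 4)%R).
  destruct (holder_approx_below x d) as [r [Hr [Hr1 Hr2]]]; [unfold d; lra|].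
  destruct (holder_approx_below y d) as [s [Hs [Hs1 Hs2]]]; [unfold d; lra|].
  pose proof (unitQ_bounds _ Hr). pose proof (unitQ_bounds _ Hs).
  assert (Hge : M (mimp (c r ⊕ c s) (x ⊕ y))).
  { apply filter_up with (mimp (c r) x ⊙ mimp (c s) y); auto.
    apply filter_mul; auto. apply mimp_plus. }
  destruct (Rle_dec (Qc2R r + Qc2R s) 1).
  - rewrite (pconst_plus r s (r + s)) in Hge; auto; rewrite ?Qc2R_plus; try lra.
    apply holder_ge in Hge; [|apply unitQ_iff; rewrite Qc2R_plus; lra].
    rewrite Qc2R_plus in Hge. unfold d in *. lra.
  - rewrite pconst_plus_sat, <- pconst1 in Hge; auto; [|lra].
    apply holder_ge in Hge; [|apply unitQ_iff; rewrite Qc2R_1; lra].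
    rewrite Qc2R_1 in Hge. unfold d in *. lra.
Qed.

Lemma holder_kernel x : M x <-> holder x = 1%R.
Proof.
  assert (Hmem : forall z, M z -> holder z = 1%R).
  { intros z Hz. apply Rle_antisym; [apply holder_range|].
    rewrite <- Qc2R_1. apply holder_ge; [apply unitQ_iff; rewrite Qc2R_1; lra|].
    unfold mimp. rewrite pconst1, mneg1, mplus0l. exact Hz. }
  split; [apply Hmem|]. intro H. apply NNPP. intro Hx.
  destruct (maximal_mneg_mpow M x HM Hx) as [n Hn].
  assert (Hpow : forall k, holder (mpow x k) = 1%R).
  { induction k as [|k IH]; simpl; [apply Hmem, filter_one, HF|].
    pose proof (holder_plus_le (¬ x) (¬ mpow x k)) as Hle.
    pose proof (holder_range (¬ x ⊕ ¬ mpow x k)).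
    unfold mmul. rewrite holder_neg. rewrite !holder_neg, H, IH in Hle. case_minmax; lra. }
  apply Hmem in Hn. rewrite holder_neg, Hpow in Hn. lra.
Qed.

Lemma holder_is_std_hom : is_std_hom A holder.
Proof.
  split; [|split; [|split]].
  - apply holder_range.
  - intros x y. apply Rle_antisym; [apply holder_plus_le | apply holder_plus_ge].
  - apply holder_neg.
  - rewrite <- mneg1, holder_neg, (proj1 (holder_kernel _)); [lra|]. apply filter_one, HF.
Qed.

End Holder.

Lemma maximal_filter_std_hom {A : Pavelka} (M : A -> Prop) : maximal_filter A M ->
  exists h : std_hom A, max_kernel h /\ forall x, M x <-> h x = 1%R.
Proof.
  intro HM. exists (StdHom _ _ (holder_is_std_hom M HM)). simpl.
  split; [|apply holder_kernel]. apply (maximal_filter_ext M); auto. apply holder_kernel.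
Qed.

Definition frac (k : nat) (q : positive) : Qc := Q2Qc (Z.of_nat k # q).

Lemma Qc2R_frac k q : Qc2R (frac k q) = (INR k / INR (Pos.to_nat q))%R.
Proof. unfold frac. rewrite Qc2R_Q2Qc. unfold Q2R. simpl. rewrite !INR_IZR_INZ, positive_nat_Z. reflexivity. Qed.

Lemma unitQ_frac k q : (k <= Pos.to_nat q)%nat -> unitQ (frac k q).
Proof.
  intro Hk. apply unitQ_iff. rewrite Qc2R_frac.
  assert (HN : (0 < INR (Pos.to_nat q))%R) by (apply lt_0_INR; lia).
  apply le_INR in Hk. pose proof (pos_INR k). apply ratio_unit; lra.
Qed.

Section StdConst.
Context {A : Pavelka} (h : std_hom A).
Local Notation c := (pconst A).

Lemma std_pconst_multiple q k : (k <= Pos.to_nat q)%nat ->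
  h (c (frac k q)) = Rmin (INR k * h (c (frac 1 q))) 1.
Proof.
  assert (HN : (0 < INR (Pos.to_nat q))%R) by (apply lt_0_INR; lia).
  pose proof (std_range h (c (frac 1 q))).
  induction k as [|k IH]; intro Hk.
  - replace (frac 0 q) with (Q2Qc 0) by (apply Qc2R_inj; rewrite Qc2R_frac, Qc2R_0; simpl; field; lra).
    rewrite pconst_zero, std_zero. simpl. case_minmax; lra.
  - assert (Hsum : c (frac k q) ⊕ c (frac 1 q) = c (frac (S k) q)).
    { apply pconst_plus; try (apply unitQ_frac; lia).
      - rewrite !Qc2R_frac, S_INR. simpl. field. lra.
      - apply unitQ_bounds, unitQ_frac, Hk. }
    rewrite <- Hsum.
    rewrite std_plus, IH, S_INR by lia. pose proof (pos_INR k). case_minmax; nra.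
Qed.

Lemma std_pconst_unit_fraction q : h (c (frac 1 q)) = (1 / INR (Pos.to_nat q))%R.
Proof.
  set (N := Pos.to_nat q). assert (HN : (1 <= N)%nat) by (unfold N; lia).
  apply le_INR in HN as HNR. simpl in HNR.
  assert (Htop : Rmin (INR N * h (c (frac 1 q))) 1 = 1%R).
  { rewrite <- (std_pconst_multiple q N) by lia.
    replace (frac N q) with Q1 by (apply Qc2R_inj; rewrite Qc2R_frac, Qc2R_1; fold N; field; lra).
    rewrite pconst1. apply std_one. }
  assert (Hcompl : (1 - h (c (frac 1 q)))%R = Rmin (INR (N - 1) * h (c (frac 1 q))) 1).
  { rewrite <- std_neg, <- (std_pconst_multiple q (N - 1)) by lia. f_equal.
    apply pconst_negE; [apply unitQ_frac; lia|].
    rewrite !Qc2R_frac, minus_INR by lia. fold N. simpl. field. lra. }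
  rewrite minus_INR in Hcompl by lia. simpl in Hcompl.
  set (x := h (c (frac 1 q))) in *. pose proof (std_range h (c (frac 1 q))) as Hx.
  assert (Hnx : (INR N * x = 1)%R) by (case_minmax; nra).
  rewrite <- Hnx. field. lra.
Qed.

Lemma std_pconst r : unitQ r -> h (c r) = Qc2R r.
Proof.
  intro Hr. pose proof (unitQ_bounds _ Hr) as [Hr0 Hr1].
  set (q := Qden r). set (N := Pos.to_nat q).
  assert (HN : (0 < INR N)%R) by (apply lt_0_INR; unfold N; lia).
  assert (EN : INR N = IZR (Zpos q)) by (unfold N; rewrite INR_IZR_INZ, positive_nat_Z; reflexivity).
  assert (Hnum : (0 <= Qnum r)%Z).
  { apply le_IZR. unfold Qc2R, Q2R in Hr0. fold q in Hr0. rewrite <- EN in Hr0.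
    apply Rmult_le_reg_r with (/ INR N)%R; [apply Rinv_0_lt_compat|]; lra. }
  set (k := Z.to_nat (Qnum r)).
  assert (Er : r = frac k q).
  { apply Qc2R_inj. rewrite Qc2R_frac. unfold Qc2R, Q2R. fold q N.
    unfold k. rewrite INR_IZR_INZ, Z2Nat.id, EN by exact Hnum. reflexivity. }
  assert (Hk : (k <= N)%nat).
  { apply INR_le. rewrite Er, Qc2R_frac in Hr1. fold N in Hr1.
    apply Rmult_le_reg_r with (/ INR N)%R; [apply Rinv_0_lt_compat; lra|].
    rewrite Rinv_r by lra. exact Hr1. }
  rewrite Er, std_pconst_multiple, std_pconst_unit_fraction, Qc2R_frac by exact Hk. fold N.
  apply le_INR in Hk. rewrite Rmin_left. field. lra.
  apply Rmult_le_reg_r with (INR N); [lra|]. field_simplify; lra.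
Qed.

End StdConst.

Lemma semisimple_le_of_points (A : Pavelka) : semisimple A -> forall x y : A,
  (forall h : std_hom A, max_kernel h -> (h x <= h y)%R) -> x ≤ y.
Proof.
  intros [I [B [f [Hsimp [Hhom [Hsurj Hinj]]]]]] x y Hxy.
  assert (E : mimp x y = mone); [|exact E].
  apply Hinj. intro i. rewrite (hom_one _ (Hhom i)).
  destruct (maximal_filter_std_hom _ (hom_kernel_maximal _ (Hhom i) (Hsurj i) (Hsimp i)))
    as [h [Hh Hker]].
  apply Hker. rewrite std_imp. specialize (Hxy h Hh). case_minmax; lra.
Qed.

Section Monadic.
Context {A : Pavelka} (E : A -> A) (HE : monadic A E).
Local Notation "0" := (mzero A).
Local Notation c := (pconst A).
Local Notation "∀ x" := (univ A E x) (at level 35, right associativity).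
Implicit Types x y b : A.

Lemma E_mono x y : x ≤ y -> E x ≤ E y. Proof. apply HE. Qed.
Lemma E_ext x : x ≤ E x. Proof. apply HE. Qed.

Definition Efixed b : Prop := E b = b.

Lemma Efixed_E x : Efixed (E x). Proof. apply HE. Qed.

Lemma Efixed_neg b : Efixed b -> Efixed (¬ b).
Proof. unfold Efixed. intro H. rewrite <- H at 1 2. apply HE. Qed.

Lemma E_le_fixed x b : x ≤ b -> Efixed b -> E x ≤ b.
Proof. intros H Hb. rewrite <- Hb. apply E_mono, H. Qed.

Lemma Efixed_of_le b : E b ≤ b -> Efixed b.
Proof. intro H. apply mle_antisym; auto using E_ext. Qed.

Lemma Efixed_pconst_mul r b : unitQ r -> Efixed b -> Efixed (c r ⊙ b).
Proof. unfold Efixed. intros Hr H. destruct HE as [_ [_ [_ [_ Hc]]]]. rewrite <- Hc, H; auto. Qed.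

Lemma Efixed_pconst_plus r b : unitQ r -> Efixed b -> Efixed (c r ⊕ b).
Proof.
  intros Hr Hb. rewrite <- (mnegK (c r ⊕ b)), mneg_plus, pconst_neg by exact Hr.
  apply Efixed_neg, Efixed_pconst_mul, Efixed_neg, Hb. apply unitQ_compl, Hr.
Qed.

Lemma Efixed_pconst r : unitQ r -> Efixed (c r).
Proof.
  intro Hr. rewrite <- (mmul1 (c r)). apply Efixed_pconst_mul; auto. apply mle1_eq, E_ext.
Qed.

Lemma Efixed_zero : Efixed 0.
Proof. rewrite <- pconst_zero. apply Efixed_pconst, unitQ_iff. rewrite Qc2R_0. lra. Qed.

Lemma Efixed_join b1 b2 : Efixed b1 -> Efixed b2 -> Efixed (mjoin b1 b2).
Proof.
  intros H1 H2. rewrite <- (mnegK (mjoin b1 b2)). apply Efixed_neg.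
  rewrite <- (mnegK b1), <- (mnegK b2). fold (mmeet (¬ b1) (¬ b2)).
  apply Efixed_of_le. apply Efixed_neg in H1. apply Efixed_neg in H2.
  apply mmeet_glb; apply E_le_fixed; auto using mmeet_lbl, mmeet_lbr.
Qed.

Lemma univ_le x : ∀ x ≤ x.
Proof. unfold univ. rewrite <- mneg_le, mnegK. apply E_ext. Qed.

Lemma Efixed_univ x : Efixed (∀ x). Proof. apply Efixed_neg, Efixed_E. Qed.

Lemma univ_fixed b : Efixed b -> ∀ b = b.
Proof. intro H. unfold univ. rewrite (Efixed_neg _ H). apply mnegK. Qed.

Lemma R_term_range (h h' : std_hom A) x : (0 <= simp (h' (∀ x)) (h x) <= 1)%R.
Proof.
  pose proof (std_range h x). pose proof (std_range h' (∀ x)).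
  unfold simp, splus, sneg. case_minmax; lra.
Qed.

Section FixedPlusClosed.
Hypothesis Efixed_plus : forall b1 b2, Efixed b1 -> Efixed b2 -> Efixed (b1 ⊕ b2).

(* The gap [h b < s < h' b] is blown up by the multiples [n (s' ⊙ b)], [s' = 1 - s]. *)
Lemma Efixed_separation (h h' : std_hom A) b : Efixed b -> (h b < h' b)%R ->
  exists b', Efixed b' /\ h b' = 0%R /\ h' b' = 1%R.
Proof.
  intros Hb Hlt. pose proof (std_range h b). pose proof (std_range h' b).
  destruct (Qc_dense_unit (h b) (h' b)) as [s [Hs Hs2]]; try lra.
  set (d := c (Q1 - s) ⊙ b).
  assert (Hd : Efixed d) by (apply Efixed_pconst_mul; auto using unitQ_compl).
  assert (hd : h d = 0%R).
  { unfold d. rewrite std_mul, std_pconst, Qc2R_compl by auto using unitQ_compl. case_minmax; lra. }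
  assert (hd' : h' d = (h' b - Qc2R s)%R).
  { unfold d. rewrite std_mul, std_pconst, Qc2R_compl by auto using unitQ_compl. case_minmax; lra. }
  destruct (INR_unbounded (/ (h' b - Qc2R s))) as [n Hn].
  exists (mmuln d n). split; [|split].
  - clear Hn. induction n as [|n IH]; simpl; auto using Efixed_zero.
  - rewrite std_muln, hd, Rmult_0_r. case_minmax; lra.
  - rewrite std_muln, hd'. apply Rmin_right.
    apply Rmult_gt_compat_r with (r := (h' b - Qc2R s)%R) in Hn; [|lra].
    rewrite Rinv_l in Hn; lra.
Qed.

Lemma R_boolean_of_Efixed_plus : R_boolean A E.
Proof.
  intros F F' h0 h0' _ _ [Hh _] [Hh' _] r [Hlb Hglb].
  set (h := StdHom _ h0 Hh). set (h' := StdHom _ h0' Hh').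
  change (forall t, (exists x, t = simp (h' (∀ x)) (h x)) -> (r <= t)%R) in Hlb.
  change (forall m, (forall t, (exists x, t = simp (h' (∀ x)) (h x)) -> (m <= t)%R) -> (m <= r)%R)
    in Hglb.
  assert (Hr0 : (0 <= r)%R) by (apply Hglb; intros t [x ->]; apply R_term_range).
  destruct (classic (exists b, Efixed b /\ h b <> h' b)) as [[b [Hb Hne]]|Hagree].
  - left. apply Rle_antisym; [|exact Hr0].
    assert (Hgap : exists b0, Efixed b0 /\ (h b0 < h' b0)%R).
    { destruct (Rlt_dec (h b) (h' b)); [exists b; auto|].
      exists (¬ b). split; [apply Efixed_neg, Hb|]. rewrite !std_neg. lra. }
    destruct Hgap as [b0 [Hb0 Hlt]].
    destruct (Efixed_separation h h' b0 Hb0 Hlt) as [b' [Hb' [H0 H1]]].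
    specialize (Hlb _ (ex_intro _ b' eq_refl)).
    rewrite univ_fixed, H0, H1 in Hlb by exact Hb'. unfold simp, splus, sneg in Hlb. case_minmax; lra.
  - right. assert (Hone : forall x, simp (h' (∀ x)) (h x) = 1%R).
    { intro x. assert (Hu : h' (∀ x) = h (∀ x)).
      { apply NNPP. intro Hn. apply Hagree. exists (∀ x). split; auto using Efixed_univ. }
      rewrite Hu. pose proof (std_le h _ _ (univ_le x)).
      unfold simp, splus, sneg. case_minmax; lra. }
    apply Rle_antisym.
    + rewrite <- (Hone 0). apply Hlb. eauto.
    + apply Hglb. intros t [x ->]. rewrite Hone. lra.
Qed.

End FixedPlusClosed.

Hypothesis HS : semisimple A.

Section Generators.
Variables (q : std_hom A) (a : A) (t e : Qc).
Hypotheses (Ht : unitQ t) (He : unitQ e) (He0 : (0 < Qc2R e)%R)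
  (Hta : (Qc2R t < q (E a))%R) (Hea : (2 * Qc2R e < q (E a))%R).

(* Generators of a filter whose maximal extensions give points [p] with [p a >= t] that are
   close to [q] on fixed elements. *)
Definition approx_gen x :=
  x = mimp (c t) a \/ exists b, Efixed b /\ (1 - Qc2R e < q b)%R /\ x = mimp (c e) b.

Lemma approx_gen_invariant l : Forall approx_gen l ->
  exists j, Efixed j /\ (q j < Qc2R e)%R /\
    forall s : std_hom A, (s (mprod l) < 1)%R -> (s a < Qc2R t)%R \/ (1 - Qc2R e < s j)%R.
Proof.
  pose proof (unitQ_bounds _ Ht) as Bt. pose proof (unitQ_bounds _ He) as Be.
  induction 1 as [|x l Hx Hl IH].
  - exists 0. split; [apply Efixed_zero|]. split; [rewrite std_zero; lra|].
    intros s. simpl. rewrite std_one. lra.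
  - destruct IH as [j [Hj [Hqj Hsj]]]. destruct Hx as [->|[b [Hb [Hqb ->]]]].
    + exists j. split; auto. split; auto. intros s Hs. simpl in Hs.
      rewrite std_mul, std_imp, std_pconst in Hs by exact Ht.
      destruct (Rlt_dec (s (mprod l)) 1) as [H1|H1]; [apply Hsj, H1|].
      left. pose proof (std_range s (mprod l)). pose proof (std_range s a). case_minmax; lra.
    + exists (mjoin (¬ b) j). split; [apply Efixed_join; auto using Efixed_neg|].
      split; [rewrite std_join, std_neg; case_minmax; lra|].
      intros s Hs. simpl in Hs. rewrite std_mul, std_imp, std_pconst in Hs by exact He.
      rewrite std_join, std_neg. pose proof (std_range s (mprod l)). pose proof (std_range s b).
      destruct (Rlt_dec (s (mprod l)) 1) as [H1|H1].
      * destruct (Hsj s H1); [left; auto | right; case_minmax; lra].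
      * right. case_minmax; lra.
Qed.

Lemma approx_gen_proper : ~ gen_filter approx_gen 0.
Proof.
  pose proof (unitQ_bounds _ Ht) as Bt. pose proof (unitQ_bounds _ He) as Be.
  intros [l [Hl Hl0]]. destruct (approx_gen_invariant l Hl) as [j [Hj [Hqj Hsj]]].
  set (g := mjoin (c t) (c e ⊕ j)).
  assert (Hg : Efixed g) by (apply Efixed_join; auto using Efixed_pconst, Efixed_pconst_plus).
  assert (Hag : a ≤ g).
  { apply (semisimple_le_of_points A HS). intros s _. unfold g.
    rewrite std_join, std_plus, !std_pconst by auto.
    assert (Hs0 : (s (mprod l) < 1)%R) by (pose proof (std_le s _ _ Hl0); rewrite std_zero in *; lra).
    pose proof (std_range s a). pose proof (std_range s j).
    destruct (Hsj s Hs0); case_minmax; lra. }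
  pose proof (std_le q _ _ (E_le_fixed _ _ Hag Hg)) as Hqa.
  unfold g in Hqa. rewrite std_join, std_plus, !std_pconst in Hqa by auto.
  pose proof (std_range q j). case_minmax; lra.
Qed.

End Generators.

Section BooleanR.
Hypothesis HR : R_boolean A E.

Lemma points_agree_of_R_pos (p q : std_hom A) eps : max_kernel p -> max_kernel q -> (0 < eps)%R ->
  (forall x, (eps <= simp (q (∀ x)) (p x))%R) -> forall b, Efixed b -> p b = q b.
Proof.
  intros Hp Hq Heps Hall.
  destruct (is_inf_exists (fun r => exists x, r = simp (q (∀ x)) (p x)) 0 _ (ex_intro _ 0 eq_refl))
    as [r [Hlb Hglb]].
  { intros r [x ->]. apply R_term_range. }
  assert (Hr : r = 0%R \/ r = 1%R).
  { apply (HR (fun z => p z = 1%R) (fun z => q z = 1%R) p q); auto.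
    - split; [apply std_homP | tauto].
    - split; [apply std_homP | tauto].
    - split; assumption. }
  assert (Hr1 : r = 1%R).
  { destruct Hr as [->|]; auto. exfalso. assert (eps <= 0)%R; [|lra].
    apply Hglb. intros r [x ->]. apply Hall. }
  assert (Hle : forall x, (q (∀ x) <= p x)%R).
  { intro x. pose proof (Hlb _ (ex_intro _ x eq_refl)) as H. rewrite Hr1 in H.
    unfold simp, splus, sneg in H. case_minmax; lra. }
  intros b Hb. apply Rle_antisym.
  - pose proof (Hle (¬ b)) as H. rewrite univ_fixed, !std_neg in H by (apply Efixed_neg, Hb). lra.
  - pose proof (Hle b) as H. rewrite univ_fixed in H by exact Hb. exact H.
Qed.

Lemma E_point_approx (q : std_hom A) a (t : R) : max_kernel q -> (t < q (E a))%R ->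
  exists p : std_hom A, max_kernel p /\ (forall b, Efixed b -> p b = q b) /\ (t < p a)%R.
Proof.
  intros Hq Hta. pose proof (std_range q (E a)).
  destruct (Rlt_dec t 0) as [Hneg|Hnneg].
  { exists q. split; auto. split; auto. pose proof (std_range q a). lra. }
  destruct (Qc_dense_unit t (q (E a))) as [t' [Ht' Ht'2]]; try lra.
  destruct (Qc_dense_unit 0 (q (E a) / 2)) as [e [He He2]]; try lra.
  pose proof (unitQ_bounds _ Ht'). pose proof (unitQ_bounds _ He).
  destruct (proper_filter_extend (gen_filter (approx_gen q a t' e)))
    as [M [HM HGM]].
  { split; [apply gen_filter_is_filter | apply approx_gen_proper; auto; lra]. }
  destruct (maximal_filter_std_hom M HM) as [p [Hp Hker]].
  assert (Hgen : forall x, approx_gen q a t' e x -> p x = 1%R)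
    by (intros x Hx; apply Hker, HGM, gen_filter_incl, Hx).
  exists p. split; auto. split.
  - apply (points_agree_of_R_pos p q (Qc2R e)); auto; [lra|].
    intro x. pose proof (std_range q (∀ x)). pose proof (std_range p x).
    pose proof (std_le p _ _ (univ_le x)).
    unfold simp, splus, sneg.
    destruct (Rlt_dec (1 - Qc2R e) (q (∀ x))) as [Hc|Hc]; [|case_minmax; lra].
    assert (Hg := Hgen (mimp (c e) (∀ x)) (or_intror (ex_intro _ _ (conj (Efixed_univ x) (conj Hc eq_refl))))).
    rewrite std_imp, std_pconst in Hg by exact He. case_minmax; lra.
  - pose proof (Hgen _ (or_introl eq_refl)) as Hg.
    rewrite std_imp, std_pconst in Hg by exact Ht'. case_minmax; lra.
Qed.

Lemma E_point_le (q : std_hom A) a (g : R -> R) (k L : R) : max_kernel q -> (0 <= k)%R ->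
  (forall u v, (u <= v)%R -> (0 <= g v - g u <= k * (v - u))%R) ->
  (forall p : std_hom A, max_kernel p -> (forall b, Efixed b -> p b = q b) -> (g (p a) <= L)%R) ->
  (g (q (E a)) <= L)%R.
Proof.
  intros Hq Hk Hg Hp. apply (le_of_lipschitz_approx g k); [exact Hk | intros u v Huv; apply Hg, Huv |].
  intros t Ht. destruct (E_point_approx q a t Hq Ht) as [p [Hpk [Hagree Hpa]]].
  specialize (Hg t (p a) ltac:(lra)). specialize (Hp p Hpk Hagree). lra.
Qed.

Lemma E_plus_E x y : E (E x ⊕ E y) = E x ⊕ E y.
Proof.
  apply mle_antisym; [|apply E_ext]. apply (semisimple_le_of_points A HS). intros q Hq.
  apply (E_point_le q _ (fun u => u) 1); [exact Hq | lra | intros; lra |]. intros p _ Hagree.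
  rewrite !std_plus, !Hagree by apply Efixed_E. lra.
Qed.

Lemma E_double x : E (x ⊕ x) = E x ⊕ E x.
Proof.
  apply mle_antisym; apply (semisimple_le_of_points A HS); intros q Hq; rewrite std_plus.
  - apply (E_point_le q _ (fun u => u) 1); [exact Hq | lra | intros; lra |]. intros p _ Hagree.
    rewrite std_plus, <- Hagree by apply Efixed_E. pose proof (std_le p _ _ (E_ext x)).
    case_minmax; lra.
  - apply (E_point_le q _ (fun u => Rmin (u + u) 1) 2); [exact Hq | lra | intros; case_minmax; lra |].
    intros p _ Hagree. rewrite <- Hagree, <- std_plus by apply Efixed_E. apply std_le, E_ext.
Qed.

Lemma E_square x : E (x ⊙ x) = E x ⊙ E x.
Proof.
  apply mle_antisym; apply (semisimple_le_of_points A HS); intros q Hq; rewrite std_mul.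
  - apply (E_point_le q _ (fun u => u) 1); [exact Hq | lra | intros; lra |]. intros p _ Hagree.
    rewrite std_mul, <- Hagree by apply Efixed_E. pose proof (std_le p _ _ (E_ext x)).
    case_minmax; lra.
  - apply (E_point_le q _ (fun u => Rmax 0 (u + u - 1)) 2); [exact Hq | lra | intros; case_minmax; lra |].
    intros p _ Hagree. rewrite <- Hagree, <- std_mul by apply Efixed_E. apply std_le, E_ext.
Qed.

End BooleanR.

Lemma E_join x y : E (mjoin x y) = mjoin (E x) (E y).
Proof.
  apply mle_antisym.
  - apply E_le_fixed; [apply mjoin_mono; apply E_ext | apply Efixed_join; apply Efixed_E].
  - apply mjoin_lub; apply E_mono; [apply mjoin_ubl | apply mjoin_ubr].
Qed.

Lemma monadic_original_of_R_boolean : R_boolean A E -> monadic_original A E.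
Proof.
  intro HR. repeat split.
  - apply E_ext.
  - apply E_join.
  - apply HE.
  - apply E_plus_E, HR.
  - apply E_double, HR.
  - apply E_square, HR.
  - apply Efixed_pconst.
Qed.

Lemma Efixed_plus_of_original : monadic_original A E ->
  forall b1 b2, Efixed b1 -> Efixed b2 -> Efixed (b1 ⊕ b2).
Proof.
  intros [_ [_ [_ [Hplus _]]]] b1 b2 H1 H2.
  pose proof (Hplus b1 b2) as H. rewrite H1, H2 in H. exact H.
Qed.

Lemma univ_mul_of_original : monadic_original A E ->
  forall x y, ∀ x ⊙ ∀ y ≤ ∀ (x ⊙ y).
Proof.
  intros Ho x y. unfold univ. rewrite mneg_mul, <- mneg_plus. apply mneg_mono.
  apply E_le_fixed.
  - apply mplus_mono; apply E_ext.
  - apply (Efixed_plus_of_original Ho); apply Efixed_E.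
Qed.

Lemma Efixed_plus_of_univ_mul : (forall x y, ∀ x ⊙ ∀ y ≤ ∀ (x ⊙ y)) ->
  forall b1 b2, Efixed b1 -> Efixed b2 -> Efixed (b1 ⊕ b2).
Proof.
  intros Hmul b1 b2 H1 H2. apply Efixed_of_le.
  specialize (Hmul (¬ b1) (¬ b2)).
  rewrite !univ_fixed in Hmul by (apply Efixed_neg; assumption).
  unfold univ in Hmul. rewrite <- mneg_plus, !mnegK in Hmul.
  rewrite <- mneg_le. exact Hmul.
Qed.

End Monadic.

Theorem theorem16 (A : Pavelka) (E : A -> A) :
  monadic A E -> semisimple A ->
  (R_boolean A E <-> monadic_original A E) /\
  (monadic_original A E <->
     (forall x y : A, mle (mmul (univ A E x) (univ A E y)) (univ A E (mmul x y)))).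
Proof.
  intros HE HS. split; split.
  - apply monadic_original_of_R_boolean; auto.
  - intro Ho. apply R_boolean_of_Efixed_plus; auto. apply Efixed_plus_of_original; auto.
  - apply univ_mul_of_original; auto.
  - intro Hmul. apply monadic_original_of_R_boolean; auto.
    apply R_boolean_of_Efixed_plus; auto. apply Efixed_plus_of_univ_mul; auto.
Qed.
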